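(* Let $\Gamma_1,\Gamma_2$ be propositional theories over $\mathcal L$ and $A^+,A^-$ sets of atoms. Then $\Gamma_1$ and $\Gamma_2$ are relativized hyperequivalent w.r.t. $A^+$ and $A^-$ if and only if $E^{A^+}_{A^-}(\Gamma_1)=E^{A^+}_{A^-}(\Gamma_2)$.
   Context: Formulas are built from atoms and $\bot$ with $\wedge,\vee,\to$; $\neg\phi$ abbreviates $\phi\to\bot$. Let $\mathcal L^*=\mathcal L\cup A^+\cup A^-$; all HT-interpretations are over $\mathcal L^*$, i.e. pairs $(X,Y)$ with $X\subseteq Y\subseteq\mathcal L^*$, total if $X=Y$. HT-satisfaction: $(X,Y)\models a$ iff $a\in X$; $(X,Y)\not\models\bot$; $\wedge,\vee$ componentwise; $(X,Y)\models\phi\to\psi$ iff (i) $(X,Y)\not\models\phi$ or $(X,Y)\models\psi$, and (ii) $Y\models\phi\to\psi$ classically. $Y$ is an answer set of $\Gamma$ iff $(Y,Y)\models\Gamma$ and $(X,Y)\not\models\Gamma$ for all $X\subsetneq Y$. Polarity of occurrences is defined recursively: the occurrence of $\phi$ in itself is positive; occurrences of $\psi_1,\psi_2$ in a positive (resp. negative) occurrence of $\psi_1\wedge\psi_2$ or $\psi_1\vee\psi_2$ are positive (resp. negative); in an occurrence of $\psi_1\to\psi_2$, $\psi_1$ is negative and $\psi_2$ positive, and if that occurrence is negative then additionally $\psi_1$ is positive and $\psi_2$ negative (occurrences may be both). An $A^+$-$A^-$-theory is a theory over $A^+\cup A^-$ in whose formulas every positive occurrence of an atom is in $A^+$ and every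 negative occurrence of an atom is in $A^-$ ($\bot$ unrestricted). $\Gamma_1,\Gamma_2$ are relativized hyperequivalent w.r.t. $A^+,A^-$ iff for every $A^+$-$A^-$-theory $\Gamma$, $\Gamma_1\cup\Gamma$ and $\Gamma_2\cup\Gamma$ have the same answer sets. For a set $X$ and $A$, $X|_A=X\cap A$. $E_s(\Gamma)$ is the set of HT-interpretations that are total HT-models of $\Gamma$ or here-countermodels of $\Gamma$ ($(X,Y)\not\models\Gamma$ and $Y\models\Gamma$). $(X,Y)$ is closed in a set $S$ if $(X',Y)\in S$ for all $X\subseteq X'\subseteq Y$. $(Y,Y)$ is $A^+$-total (for $\Gamma$) iff $(Y|_{A^+},Y)$ is closed in $E_s(\Gamma)$. $(X,Y)$ is $A^+$-closed in $E_s(\Gamma)$ iff $(X',Y)\in E_s(\Gamma)$ for all $X'\subseteq Y$ with $X|_{A^+}\subseteq X'|_{A^+}$ and $X'|_{A^-}\subseteq X|_{A^-}$. $E^{A^+}_{A^-}(\Gamma)$ (HT-hyperequivalence interpretations) is the set of HT-interpretations $(X,Y)$ such that $(Y,Y)$ is $A^+$-total and there is $X'\subseteq Y$ with $X=X'|_{A^+\cup A^-}$ and $(X',Y)$ $A^+$-closed in $E_s(\Gamma)$. *)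

From Stdlib Require Import Bool.

Set Implicit Arguments.

Section Syntax.
Variable Atom : Type.

Inductive form : Type :=
| Atm : Atom -> form
| Bot : form
| And : form -> form -> form
| Or  : form -> form -> form
| Imp : form -> form -> form.

Definition aset := Atom -> Prop.
Definition theory := form -> Prop.

Definition subset (X Y : aset) : Prop := forall a, X a -> Y a.
Definition seteq (X Y : aset) : Prop := forall a, X a <-> Y a.
Definition psubset (X Y : aset) : Prop := subset X Y /\ ~ subset Y X.
Definition inter (X Y : aset) : aset := fun a => X a /\ Y a.
Definition union (X Y : aset) : aset := fun a => X a \/ Y a.

Definition Lstar (L Ap Am : aset) : aset := fun a => L a \/ Ap a \/ Am a.

Fixpoint atom_in (a : Atom) (f : form) : Prop :=
  match f with
  | Atm b => b = a
  | Bot => False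
  | And g h | Or g h | Imp g h => atom_in a g \/ atom_in a h
  end.

Definition theory_over (G : theory) (S : aset) : Prop :=
  forall f, G f -> forall a, atom_in a f -> S a.

Fixpoint csat (Y : aset) (f : form) : Prop :=
  match f with
  | Atm a => Y a
  | Bot => False
  | And g h => csat Y g /\ csat Y h
  | Or g h => csat Y g \/ csat Y h
  | Imp g h => csat Y g -> csat Y h
  end.

Fixpoint htsat (X Y : aset) (f : form) : Prop :=
  match f with
  | Atm a => X a
  | Bot => False
  | And g h => htsat X Y g /\ htsat X Y h
  | Or g h => htsat X Y g \/ htsat X Y h
  | Imp g h => (htsat X Y g -> htsat X Y h) /\ csat Y (Imp g h)
  end.

Definition ctheory (Y : aset) (G : theory) : Prop := forall f, G f -> csat Y f.
Definition httheory (X Y : aset) (G : theory) : Prop := forall f, G f -> htsat X Y f.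

Definition htinterp (Ls X Y : aset) : Prop := subset X Y /\ subset Y Ls.

Definition answer_set (Ls : aset) (G : theory) (Y : aset) : Prop :=
  subset Y Ls /\ httheory Y Y G /\
  forall X, psubset X Y -> ~ httheory X Y G.

(* Polarity of atom occurrences.  [occ p n f a pol]: the formula occurrence f,
   whose own polarity is positive iff p and negative iff n, contains an
   occurrence of atom a of polarity pol (true = positive, false = negative). *)
Fixpoint occ (p n : bool) (f : form) (a : Atom) (pol : bool) : Prop :=
  match f with
  | Atm b => b = a /\ (if pol then p else n) = true
  | Bot => False
  | And g h | Or g h => occ p n g a pol \/ occ p n h a pol
  | Imp g h => occ n true g a pol \/ occ true n h a pol
  end.

Definition pos_occ (a : Atom) (f : form) : Prop := occ true false f a true.
Definition neg_occ (a : Atom) (f : form) : Prop := occ true false f a false.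

Definition ApAm_theory (Ap Am : aset) (G : theory) : Prop :=
  theory_over G (union Ap Am) /\
  forall f, G f -> forall a, (pos_occ a f -> Ap a) /\ (neg_occ a f -> Am a).

Definition tunion (G1 G2 : theory) : theory := fun f => G1 f \/ G2 f.

Definition rel_hyperequiv (L Ap Am : aset) (G1 G2 : theory) : Prop :=
  forall G, ApAm_theory Ap Am G ->
    forall Y, answer_set (Lstar L Ap Am) (tunion G1 G) Y <->
              answer_set (Lstar L Ap Am) (tunion G2 G) Y.

Definition Es (Ls : aset) (G : theory) (X Y : aset) : Prop :=
  htinterp Ls X Y /\
  ((seteq X Y /\ httheory Y Y G) \/ (~ httheory X Y G /\ ctheory Y G)).

Definition closed_in (S : aset -> aset -> Prop) (X Y : aset) : Prop :=
  forall X', subset X X' -> subset X' Y -> S X' Y.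

Definition Ap_total (Ls Ap : aset) (G : theory) (Y : aset) : Prop :=
  closed_in (Es Ls G) (inter Y Ap) Y.

Definition Ap_closed (Ls Ap Am : aset) (G : theory) (X Y : aset) : Prop :=
  forall X', subset X' Y ->
    subset (inter X Ap) (inter X' Ap) ->
    subset (inter X' Am) (inter X Am) ->
    Es Ls G X' Y.

Definition EAA (L Ap Am : aset) (G : theory) (X Y : aset) : Prop :=
  let Ls := Lstar L Ap Am in
  htinterp Ls X Y /\
  Ap_total Ls Ap G Y /\
  exists X', subset X' Y /\ seteq X (inter X' (union Ap Am)) /\
             Ap_closed Ls Ap Am G X' Y.

End Syntax.

(* An A+-A- theory is monotone in the atoms of A+ and antitone in those of A-,
   so if (X,Y) satisfies it, so does every (X',Y) with more A+ atoms and fewer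
   A- atoms.  Hence whenever Y is an answer set of G1 u G and X < Y satisfies G,
   the pair (X,Y) is A+-closed in E_s(G1); this makes E^{A+}_{A-} determine the
   answer sets of all extensions G1 u G.  Conversely, an A+-closed pair (X,Y)
   with A+-total (Y,Y) is detected by the witness theory
     { a | a in X n A+ }  u  { a -> b | a in (Y \ X) n A-, b in Y n A+ },
   for which Y is an answer set of G1 u witness; hyperequivalence transfers
   this answer set to G2, which makes (X,Y) A+-closed for G2 as well. *)
From Stdlib Require Import Classical.
Set Implicit Arguments.

Section HyperEquivalence.
Variable Atom : Type.
Implicit Types (X Y W : aset Atom) (G : theory Atom) (Ls Ap Am : aset Atom).

Lemma htsat_total_iff_csat Y f : htsat Y Y f <-> csat Y f.
Proof. induction f; simpl; tauto. Qed.

Lemma httheory_tunion W Y G1 G2 :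
  httheory W Y (tunion G1 G2) <-> httheory W Y G1 /\ httheory W Y G2.
Proof.
  split.
  - intros H; split; intros f Hf; apply H; [left | right]; exact Hf.
  - intros [H1 H2] f [Hf | Hf]; auto.
Qed.

Lemma htsat_polarity_mono f : forall p n X X' Y,
  (forall a, occ p n f a true -> X a -> X' a) ->
  (forall a, occ p n f a false -> X' a -> X a) ->
  (p = true -> htsat X Y f -> htsat X' Y f) /\
  (n = true -> htsat X' Y f -> htsat X Y f).
Proof.
  induction f as [a | | f1 IH1 f2 IH2 | f1 IH1 f2 IH2 | f1 IH1 f2 IH2];
    intros p n X X' Y HP HN; simpl in *.
  - split; intros Hp Hx; [apply (HP a) | apply (HN a)]; auto.
  - tauto.
  - destruct (IH1 p n X X' Y) as [A1 B1]; auto.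
    destruct (IH2 p n X X' Y) as [A2 B2]; auto.
    split; intros Hp [Hf1 Hf2]; auto.
  - destruct (IH1 p n X X' Y) as [A1 B1]; auto.
    destruct (IH2 p n X X' Y) as [A2 B2]; auto.
    split; intros Hp [Hf1 | Hf2]; auto.
  - destruct (IH1 n true X X' Y) as [A1 B1]; auto.
    destruct (IH2 true n X X' Y) as [A2 B2]; auto.
    split; intros Hp [Himp Hc]; auto.
Qed.

Lemma httheory_ApAm_mono Ap Am G X X' Y :
  ApAm_theory Ap Am G -> httheory X Y G ->
  subset (inter X Ap) (inter X' Ap) -> subset (inter X' Am) (inter X Am) ->
  httheory X' Y G.
Proof.
  intros [_ Hpol] HX SAp SAm f Hf.
  apply (htsat_polarity_mono f true false X X' Y); auto.
  - intros a Ho Hx. apply (SAp a). split; [exact Hx | apply (Hpol f Hf a); exact Ho].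
  - intros a Ho Hx. apply (SAm a). split; [exact Hx | apply (Hpol f Hf a); exact Ho].
Qed.

Lemma Es_total_model Ls G X Y : Es Ls G X Y -> seteq X Y -> httheory Y Y G.
Proof.
  intros [_ [[_ HY] | [HnX HcY]]] HXY; auto.
  exfalso; apply HnX; intros f Hf.
  apply (htsat_polarity_mono f true true Y X Y); auto.
  - intros a _; apply HXY.
  - intros a _; apply HXY.
  - apply htsat_total_iff_csat; auto.
Qed.

Lemma Es_strict_countermodel Ls G W Y : Es Ls G W Y -> psubset W Y -> ~ httheory W Y G.
Proof.
  intros [_ [[HWY _] | [HnW _]]] [_ HnYW]; auto.
  exfalso; apply HnYW; intros a; apply HWY.
Qed.

Lemma Es_intro Ls G W Y : subset W Y -> subset Y Ls -> httheory Y Y G ->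
  (psubset W Y -> ~ httheory W Y G) -> Es Ls G W Y.
Proof.
  intros SWY SY HY Hmin. split; [split; assumption |].
  destruct (classic (subset Y W)) as [SYW | SYW].
  - left; split; [split; auto | exact HY].
  - right; split; [apply Hmin; split; assumption |].
    intros f Hf; apply htsat_total_iff_csat; auto.
Qed.

Lemma Ap_total_model Ls Ap G Y : Ap_total Ls Ap G Y -> subset Y Ls /\ httheory Y Y G.
Proof.
  intros HT.
  assert (E : Es Ls G Y Y) by (apply HT; [intros a [Ha _] | intros a]; auto).
  split; [apply (proj2 (proj1 E)) | apply (Es_total_model E); intros a; tauto].
Qed.

Lemma Ap_total_iff_Ap_closed_self Ls Ap Am G Y :
  Ap_total Ls Ap G Y <-> Ap_closed Ls Ap Am G Y Y.
Proof.
  split.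
  - intros HT X' SX'Y SAp _. apply HT; auto.
    intros a Ha; apply (SAp a Ha).
  - intros HC X' SX' SX'Y. apply HC; auto.
    + intros a [Ha HAp]; split; auto. apply SX'; split; auto.
    + intros a [Ha HAm]; split; auto.
Qed.

Lemma Ap_closed_of_answer_set Ls Ap Am G1 G X Y :
  ApAm_theory Ap Am G -> answer_set Ls (tunion G1 G) Y ->
  subset X Y -> httheory X Y G -> Ap_closed Ls Ap Am G1 X Y.
Proof.
  intros HG [SY [HY Hmin]] SXY HX W SWY SAp SAm.
  apply httheory_tunion in HY as [HY1 _].
  apply Es_intro; auto.
  intros HWY HW1. apply (Hmin W HWY). apply httheory_tunion; split; auto.
  apply (httheory_ApAm_mono HG HX); auto.
Qed.

Definition witness_theory Ap Am Y X : theory Atom := fun f =>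
  (exists a, Ap a /\ X a /\ f = Atm a) \/
  (exists a b, Am a /\ Y a /\ ~ X a /\ Ap b /\ Y b /\ f = Imp (Atm a) (Atm b)).

Lemma witness_theory_ApAm Ap Am Y X : ApAm_theory Ap Am (witness_theory Ap Am Y X).
Proof.
  split.
  - intros f [[a [Ha [_ ->]]] | [a [b [Ha [_ [_ [Hb [_ ->]]]]]]]] c Hc; simpl in Hc.
    + subst; left; auto.
    + destruct Hc as [-> | ->]; [right | left]; auto.
  - intros f [[a [Ha [_ ->]]] | [a [b [Ha [_ [_ [Hb [_ ->]]]]]]]] c;
      unfold pos_occ, neg_occ; simpl.
    + split; intros [-> E]; auto; discriminate.
    + split; intros [[-> E] | [-> E]]; auto; discriminate.
Qed.

Lemma httheory_witness Ap Am Y X W : subset W Y ->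
  httheory W Y (witness_theory Ap Am Y X) <->
  (forall a, Ap a -> X a -> W a) /\
  (forall a b, Am a -> Y a -> ~ X a -> Ap b -> Y b -> W a -> W b).
Proof.
  intros SWY; split.
  - intros HW; split.
    + intros a Ha Hx. apply (HW (Atm a)). left; eauto.
    + intros a b Ha Hya Hxa Hb Hyb. apply (HW (Imp (Atm a) (Atm b))).
      right; exists a, b; auto 10.
  - intros [HAp HAm] f [[a [Ha [Hx ->]]] | [a [b [Ha [Hya [Hxa [Hb [Hyb ->]]]]]]]];
      simpl; eauto.
Qed.

Lemma witness_theory_sat Ap Am Y X : subset X Y ->
  httheory X Y (witness_theory Ap Am Y X).
Proof. intros SXY. apply httheory_witness; auto; split; tauto. Qed.

(* A model W < Y of the witness theory either contains an atom of (Y \ X) n A-,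
   and then all of Y n A+ (A+-totality applies), or it contains X n A+ and no
   atom of (Y \ X) n A- (A+-closedness applies). *)
Lemma answer_set_witness Ls Ap Am G Y X : subset X Y ->
  Ap_total Ls Ap G Y -> Ap_closed Ls Ap Am G X Y ->
  answer_set Ls (tunion G (witness_theory Ap Am Y X)) Y.
Proof.
  intros SXY HT HC. destruct (Ap_total_model HT) as [SY HY].
  split; [exact SY | split].
  - apply httheory_tunion; split; [exact HY |].
    apply httheory_witness; [intros a; auto | split; auto].
  - intros W [SWY HnYW] HW. apply httheory_tunion in HW as [HWG HWw].
    apply (httheory_witness Ap Am X SWY) in HWw as [HXAp HAmAp].
    assert (E : Es Ls G W Y).
    { destruct (classic (exists a, Am a /\ Y a /\ ~ X a /\ W a))
        as [[a [Ha [Hya [Hxa Hwa]]]] | Hno].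
      - apply HT; auto. intros b [Hyb Hb]. eauto.
      - apply HC; auto.
        + intros b [Hxb Hb]; split; auto.
        + intros b [Hwb Hb]; split; auto.
          apply NNPP; intro Hxb. apply Hno; exists b; auto. }
    exact (Es_strict_countermodel E (conj SWY HnYW) HWG).
Qed.

Lemma EAA_of_Ap_closed L Ap Am G X Y : subset X Y ->
  Ap_total (Lstar L Ap Am) Ap G Y -> Ap_closed (Lstar L Ap Am) Ap Am G X Y ->
  EAA L Ap Am G (inter X (union Ap Am)) Y.
Proof.
  intros SXY HT HC. destruct (Ap_total_model HT) as [SY _].
  split; [split; [intros a [Hx _]; auto | exact SY] | split; [exact HT |]].
  exists X; split; [exact SXY | split; [intros a; tauto | exact HC]].
Qed.

Lemma EAA_transfer L Ap Am G1 G2 :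
  rel_hyperequiv L Ap Am G1 G2 ->
  forall X Y, EAA L Ap Am G1 X Y -> EAA L Ap Am G2 X Y.
Proof.
  intros HR X Y [HI [HT [X' [SX'Y [HX HC]]]]].
  assert (HCY : Ap_closed (Lstar L Ap Am) Ap Am G1 Y Y)
    by (apply Ap_total_iff_Ap_closed_self; exact HT).
  assert (SYY : subset Y Y) by (intros a; auto).
  assert (HT2 : Ap_total (Lstar L Ap Am) Ap G2 Y).
  { apply (Ap_total_iff_Ap_closed_self _ _ Am).
    apply (Ap_closed_of_answer_set (witness_theory_ApAm Ap Am Y Y));
      auto using witness_theory_sat.
    apply (HR _ (witness_theory_ApAm Ap Am Y Y)), answer_set_witness; auto. }
  assert (HC2 : Ap_closed (Lstar L Ap Am) Ap Am G2 X' Y).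
  { apply (Ap_closed_of_answer_set (witness_theory_ApAm Ap Am Y X'));
      auto using witness_theory_sat.
    apply (HR _ (witness_theory_ApAm Ap Am Y X')), answer_set_witness; auto. }
  split; [exact HI | split; [exact HT2 | exists X'; auto]].
Qed.

Lemma answer_set_transfer L Ap Am G1 G2 :
  (forall X Y, EAA L Ap Am G1 X Y -> EAA L Ap Am G2 X Y) ->
  forall G, ApAm_theory Ap Am G -> forall Y,
  answer_set (Lstar L Ap Am) (tunion G1 G) Y -> answer_set (Lstar L Ap Am) (tunion G2 G) Y.
Proof.
  intros HE G HG Y HAS.
  pose proof HAS as [SY [HY Hmin]]. apply httheory_tunion in HY as [_ HYG].
  assert (SYY : subset Y Y) by (intros a; auto).
  assert (HCY : Ap_closed (Lstar L Ap Am) Ap Am G1 Y Y)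
    by (apply (Ap_closed_of_answer_set HG HAS); auto).
  assert (HT : Ap_total (Lstar L Ap Am) Ap G1 Y)
    by (apply (Ap_total_iff_Ap_closed_self _ _ Am); exact HCY).
  destruct (HE _ _ (EAA_of_Ap_closed SYY HT HCY)) as [_ [HT2 _]].
  split; [exact SY | split].
  - apply httheory_tunion; split; [apply (Ap_total_model HT2) | exact HYG].
  - intros W HWY HW. apply httheory_tunion in HW as [HW2 HWG].
    assert (HCW : Ap_closed (Lstar L Ap Am) Ap Am G1 W Y)
      by (apply (Ap_closed_of_answer_set HG HAS); auto; apply HWY).
    destruct (HE _ _ (EAA_of_Ap_closed (proj1 HWY) HT HCW))
      as [_ [_ [X' [_ [HWX' HC2]]]]].
    (* W and X' agree on A+ u A-, so the closedness of X' covers W itself. *)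
    assert (E : Es (Lstar L Ap Am) G2 W Y).
    { apply HC2; [apply HWY | |].
      - intros a [Hxa Ha]. split; [| exact Ha].
        apply (proj2 (HWX' a)); split; [exact Hxa | left; exact Ha].
      - intros a [Hwa Ha]. split; [| exact Ha].
        apply (proj1 (HWX' a)); split; [exact Hwa | right; exact Ha]. }
    exact (Es_strict_countermodel E HWY HW2).
Qed.

End HyperEquivalence.

Theorem mainTheorem11 (Atom : Type) (L Ap Am : aset Atom) (G1 G2 : theory Atom)
  (H1 : theory_over G1 L) (H2 : theory_over G2 L) :
  rel_hyperequiv L Ap Am G1 G2 <->
  (forall X Y : aset Atom, EAA L Ap Am G1 X Y <-> EAA L Ap Am G2 X Y).
Proof.
  split.
  - intros HR X Y; split; apply EAA_transfer; auto.
    intros G HG Y'; symmetry; apply HR; exact HG.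
  - intros HE G HG Y; split; apply answer_set_transfer; auto; intros X Y'; apply HE.
Qed.
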